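(* Let $n=p_1p_2\cdots p_l$ be an odd composite integer, where $p_1,\dots,p_l$ are distinct primes. Then $C_R(\mathbb{Z}_n)=\prod_{i=1}^{l} C_R(\mathbb{Z}_{p_i})$.
   Context: For a positive integer $m$, a reduced Weierstrass curve over $\mathbb{Z}_{m}$ is $y^2=x^3+ax+b$ with $(a,b)\in\mathbb{Z}_{m}^2$; it is nonsingular iff $\Delta=-16(4a^3+27b^2)$ is a unit in $\mathbb{Z}_{m}$. Two such curves with coefficients $(a,b)$ and $(\bar a,\bar b)$ are isomorphic iff there is $u\in\mathbb{Z}_{m}^*$ with $\bar a=u^{-4}a$ and $\bar b=u^{-6}b$ (i.e. related by the change of variables $(x,y)\mapsto(u^2x,u^3y)$). $C_R(\mathbb{Z}_m)$ denotes the number of isomorphism classes of nonsingular reduced curves over $\mathbb{Z}_m$. *)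

From mathcomp Require Import all_boot all_order all_algebra.
Set Implicit Arguments. Unset Strict Implicit. Unset Printing Implicit Defensive.
Import GRing.Theory.
Local Open Scope ring_scope.

(* A reduced Weierstrass curve y^2 = x^3 + a x + b over Z_m is given by its
   coefficient pair (a, b) : 'Z_m * 'Z_m.  ('Z_m is Z/mZ for m >= 2.) *)

Definition nonsingular (m : nat) (c : 'Z_m * 'Z_m) : bool :=
  (- 16 * (4 * c.1 ^+ 3 + 27 * c.2 ^+ 2)) \is a GRing.unit.

Definition curve_iso (m : nat) (c d : 'Z_m * 'Z_m) : bool :=
  [exists u : 'Z_m,
     [&& u \is a GRing.unit, d.1 == u ^- 4 * c.1 & d.2 == u ^- 6 * c.2]].

Definition iso_class (m : nat) (c : 'Z_m * 'Z_m) : {set 'Z_m * 'Z_m} :=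
  [set d | curve_iso c d].

Definition C_R (m : nat) : nat :=
  #|[set iso_class c | c in [set c : 'Z_m * 'Z_m | nonsingular c]]|.

From HB Require Import structures.
From mathcomp Require Import all_boot all_order all_algebra.
Set Implicit Arguments. Unset Strict Implicit. Unset Printing Implicit Defensive.
Import GRing.Theory.
Local Open Scope ring_scope.

(* For coprime m, k > 1, reduction modulo m and modulo k identifies the ring
   Z_(mk) with Z_m * Z_k.  Hence the discriminant is a unit mod mk iff it is a
   unit mod m and mod k, and, lifting a pair of units, two curves are
   isomorphic over Z_(mk) iff their reductions are isomorphic over Z_m and
   over Z_k.  Every isomorphism class over Z_(mk) is thus the preimage of a
   product of classes over Z_m and Z_k, and distinct products have distinct
   preimages, so C_R(mk) = C_R(m) C_R(k); induction over the distinct primes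
   dividing n ends the proof. *)

Section PreimageProduct.
Variables (T T1 T2 : finType) (h : T -> T1 * T2).
Hypothesis h_bij : bijective h.

Lemma bij_preimset_inj : injective (fun A : {set T1 * T2} => h @^-1: A).
Proof.
have [g _ gK] := h_bij.
move=> A B /setP eqAB; apply/setP => y.
by have := eqAB (g y); rewrite !inE gK.
Qed.

Lemma setX_inj (A1 B1 : {set T1}) (A2 B2 : {set T2}) x1 x2 :
  x1 \in A1 -> x2 \in A2 -> setX A1 A2 = setX B1 B2 -> A1 = B1 /\ A2 = B2.
Proof.
move=> x1A1 x2A2 eqX.
have /setXP[x1B1 x2B2] : (x1, x2) \in setX B1 B2 by rewrite -eqX in_setX x1A1.
split; apply/setP => y.
  by move/setP/(_ (y, x2)): eqX; rewrite !in_setX x2A2 x2B2 !andbT.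
by move/setP/(_ (x1, y)): eqX; rewrite !in_setX x1A1 x1B1.
Qed.

Lemma card_classesX (P : {set T}) (P1 : {set T1}) (P2 : {set T2})
    (cl : T -> {set T}) (cl1 : T1 -> {set T1}) (cl2 : T2 -> {set T2}) :
  (forall x, (x \in P) = ((h x).1 \in P1) && ((h x).2 \in P2)) ->
  (forall x, cl x = h @^-1: setX (cl1 (h x).1) (cl2 (h x).2)) ->
  (forall x1, x1 \in cl1 x1) -> (forall x2, x2 \in cl2 x2) ->
  #|cl @: P| = (#|cl1 @: P1| * #|cl2 @: P2|)%N.
Proof.
move=> P_h cl_h cl1_refl cl2_refl; have [g _ gK] := h_bij.
pose F (A : {set T1} * {set T2}) := h @^-1: setX A.1 A.2.
have -> : cl @: P = F @: setX (cl1 @: P1) (cl2 @: P2).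
  apply/setP => A; apply/imsetP/imsetP => [[x xP ->]|[[A1 A2]]].
    exists (cl1 (h x).1, cl2 (h x).2); last exact: cl_h.
    by move: xP; rewrite P_h in_setX => /andP[x1P x2P]; rewrite !imset_f.
  rewrite in_setX => /andP[/imsetP[x1 x1P ->] /imsetP[x2 x2P ->]] ->.
  exists (g (x1, x2)); first by rewrite P_h gK /= x1P x2P.
  by rewrite cl_h gK.
rewrite card_in_imset ?cardsX // => -[A1 A2] [B1 B2].
rewrite in_setX => /andP[/imsetP[x1 _ ->] /imsetP[x2 _ ->]] _ /bij_preimset_inj.
by case/(setX_inj (cl1_refl x1) (cl2_refl x2)) => -> ->.
Qed.

End PreimageProduct.

Definition discriminant (R : pzRingType) (c : R * R) : R :=
  - 16 * (4 * c.1 ^+ 3 + 27 * c.2 ^+ 2).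

Lemma nonsingularE m (c : 'Z_m * 'Z_m) :
  nonsingular c = (discriminant c \is a GRing.unit).
Proof. by []. Qed.

Definition twist (R : unitRingType) (u : R) (c : R * R) : R * R :=
  (u ^- 4 * c.1, u ^- 6 * c.2).

Definition curve_map (R S : Type) (f : R -> S) (c : R * R) : S * S :=
  (f c.1, f c.2).

Lemma rmorph_discriminant (R S : pzRingType) (f : {rmorphism R -> S}) c :
  f (discriminant c) = discriminant (curve_map f c).
Proof.
rewrite /discriminant rmorphM rmorphN rmorph_nat rmorphD.
by rewrite !rmorphM !rmorph_nat.
Qed.

Lemma rmorph_twist (R S : unitRingType) (f : {rmorphism R -> S}) u c :
  u \is a GRing.unit -> curve_map f (twist u c) = twist (f u) (curve_map f c).
Proof.
by move=> uU; rewrite /curve_map /= !rmorphM !rmorphV ?unitrX // !rmorphXn.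
Qed.

Lemma curve_isoP m (c d : 'Z_m * 'Z_m) :
  reflect (exists2 u, u \is a GRing.unit & d = twist u c) (curve_iso c d).
Proof.
apply: (iffP existsP) => [[u /and3P[uU /eqP d1 /eqP d2]] | [u uU ->]].
  by exists u => //; rewrite /twist -d1 -d2; case: d {d1 d2}.
by exists u; rewrite uU !eqxx.
Qed.

Lemma iso_class_refl m (c : 'Z_m * 'Z_m) : c \in iso_class c.
Proof.
rewrite inE; apply/curve_isoP; exists 1; first exact: unitr1.
by rewrite /twist !expr1n invr1 !mul1r; case: c.
Qed.

Definition Zp_reduce (m n : nat) (x : 'Z_n) : 'Z_m := (x : nat)%:R.
Arguments Zp_reduce m {n} x.

Section ZpReduce.
Variables (m n : nat).
Hypotheses (m_gt1 : (1 < m)%N) (n_gt1 : (1 < n)%N) (m_dvd_n : (m %| n)%N).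

Lemma Zp_reduce_nat k : Zp_reduce m (k%:R : 'Z_n) = k%:R.
Proof.
by rewrite /Zp_reduce val_Zp_nat // -(Zp_nat_mod m_gt1) modn_dvdm // Zp_nat_mod.
Qed.

Lemma Zp_reduce_is_nmod_morphism : nmod_morphism (@Zp_reduce m n).
Proof.
split=> [|x y]; first exact: (Zp_reduce_nat 0).
by rewrite -[x]natr_Zp -[y]natr_Zp -natrD !Zp_reduce_nat natrD.
Qed.

Lemma Zp_reduce_is_monoid_morphism : monoid_morphism (@Zp_reduce m n).
Proof.
split=> [|x y]; first exact: (Zp_reduce_nat 1).
by rewrite -[x]natr_Zp -[y]natr_Zp -natrM !Zp_reduce_nat natrM.
Qed.

Lemma Zp_reduce_unitE (x : 'Z_n) :
  (Zp_reduce m x \is a GRing.unit) = coprime m x.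
Proof. exact: unitZpE. Qed.

Lemma Zp_reduce_eq (x y : 'Z_n) :
  (Zp_reduce m x == Zp_reduce m y) = (x == y %[mod m])%N.
Proof.
rewrite /Zp_reduce; apply/eqP/eqP => [/(congr1 val)|eq_mod].
  by rewrite /= !val_Zp_nat.
by rewrite -(Zp_nat_mod m_gt1) eq_mod Zp_nat_mod.
Qed.

End ZpReduce.

Section CRT.
Variables (m k : nat).
Hypotheses (m_gt1 : (1 < m)%N) (k_gt1 : (1 < k)%N) (co_mk : coprime m k).

Let mk_gt1 : (1 < m * k)%N.
Proof. by rewrite (leq_trans m_gt1) // leq_pmulr // ltnW. Qed.

Let m_dvd_mk : (m %| m * k)%N. Proof. exact: dvdn_mulr. Qed.
Let k_dvd_mk : (k %| m * k)%N. Proof. exact: dvdn_mull. Qed.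

(* Two distinct constants, so that each reduction carries its own canonical
   rmorphism instance. *)
Let red_m : 'Z_(m * k) -> 'Z_m := Zp_reduce m.
Let red_k : 'Z_(m * k) -> 'Z_k := Zp_reduce k.

#[local] HB.instance Definition _ := GRing.isNmodMorphism.Build _ _ red_m
  (Zp_reduce_is_nmod_morphism m_gt1 mk_gt1 m_dvd_mk).
#[local] HB.instance Definition _ := GRing.isMonoidMorphism.Build _ _ red_m
  (Zp_reduce_is_monoid_morphism m_gt1 mk_gt1 m_dvd_mk).
#[local] HB.instance Definition _ := GRing.isNmodMorphism.Build _ _ red_k
  (Zp_reduce_is_nmod_morphism k_gt1 mk_gt1 k_dvd_mk).
#[local] HB.instance Definition _ := GRing.isMonoidMorphism.Build _ _ red_k
  (Zp_reduce_is_monoid_morphism k_gt1 mk_gt1 k_dvd_mk).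

Definition Zp_crt (x : 'Z_(m * k)) : 'Z_m * 'Z_k := (red_m x, red_k x).

Lemma Zp_crt_inj : injective Zp_crt.
Proof.
move=> x y [/eqP + /eqP]; rewrite !Zp_reduce_eq // => eq_m eq_k.
have : (x == y %[mod m * k])%N by rewrite chinese_remainder // eq_m eq_k.
have ord_lt (z : 'Z_(m * k)) : (z < m * k)%N.
  by rewrite -[X in (_ < X)%N]Zp_cast.
by rewrite !modn_small ?ord_lt // => /eqP/val_inj.
Qed.

Lemma Zp_crt_bij : bijective Zp_crt.
Proof.
by apply: (inj_card_bij Zp_crt_inj); rewrite card_prod !card_ord !Zp_cast.
Qed.

Lemma Zp_crt_unitE (x : 'Z_(m * k)) :
  (x \is a GRing.unit) =
    (red_m x \is a GRing.unit) && (red_k x \is a GRing.unit).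
Proof. by rewrite !Zp_reduce_unitE // -coprimeMl -unitZpE // natr_Zp. Qed.

Definition curve_crt (c : 'Z_(m * k) * 'Z_(m * k)) :
  ('Z_m * 'Z_m) * ('Z_k * 'Z_k) := (curve_map red_m c, curve_map red_k c).

Lemma curve_crt_bij : bijective curve_crt.
Proof.
apply: inj_card_bij => [[x1 y1] [x2 y2] [ex1 ey1 ex2 ey2]|].
  by congr pair; apply: Zp_crt_inj; rewrite /Zp_crt ?ex1 ?ex2 ?ey1 ?ey2.
by rewrite !card_prod !card_ord !Zp_cast // mulnACA.
Qed.

Lemma nonsingular_crt c :
  nonsingular c = nonsingular (curve_crt c).1 && nonsingular (curve_crt c).2.
Proof. by rewrite !nonsingularE Zp_crt_unitE !rmorph_discriminant. Qed.

Lemma curve_crt_twist u c : u \is a GRing.unit ->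
  curve_crt (twist u c) =
    (twist (red_m u) (curve_crt c).1, twist (red_k u) (curve_crt c).2).
Proof. by move=> uU; rewrite /curve_crt !rmorph_twist. Qed.

Lemma curve_iso_crt c d :
  curve_iso c d =
    curve_iso (curve_crt c).1 (curve_crt d).1
    && curve_iso (curve_crt c).2 (curve_crt d).2.
Proof.
apply/curve_isoP/andP => [[u uU ->] | [/curve_isoP[u1 u1U e1] iso_k]].
  rewrite curve_crt_twist //; split; apply/curve_isoP.
    by exists (red_m u) => //; apply: rmorph_unit.
  by exists (red_k u) => //; apply: rmorph_unit.
have [u2 u2U e2] := curve_isoP _ _ iso_k.
have [g _ gK] := Zp_crt_bij; have [u1E u2E] := gK (u1, u2).
set u := g _ in u1E u2E.
have uU : u \is a GRing.unit by rewrite Zp_crt_unitE u1E u2E u1U u2U.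
exists u => //; apply: (bij_inj curve_crt_bij).
by rewrite curve_crt_twist // u1E u2E -e1 -e2; case: curve_crt.
Qed.

Lemma C_R_mul : C_R (m * k) = (C_R m * C_R k)%N.
Proof.
apply: (card_classesX curve_crt_bij) => [c|c|c|c]; rewrite ?iso_class_refl //.
  by rewrite !inE nonsingular_crt.
by apply/setP => d; rewrite !inE curve_iso_crt.
Qed.

End CRT.

Local Close Scope ring_scope.

Lemma coprime_prodr n ns : all (coprime n) ns -> coprime n (\prod_(m <- ns) m).
Proof.
elim: ns => [|m ns IH]; first by rewrite big_nil coprimen1.
by rewrite big_cons coprimeMr /= => /andP[-> /IH].
Qed.

Lemma prodn_gt1 ns : ns != [::] -> all (leq 2) ns -> 1 < \prod_(n <- ns) n.
Proof.
case: ns => [|n ns] // _ /andP[n_gt1 ns_gt1].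
rewrite big_cons (leq_trans n_gt1) // leq_pmulr //.
rewrite big_seq prodn_cond_gt0 // => m.
by move/(allP ns_gt1)/ltnW.
Qed.

Lemma pairwise_coprime_primes ps :
  uniq ps -> all prime ps -> pairwise coprime ps.
Proof.
elim: ps => [|p ps IH] //= /andP[p_notin ps_uniq] /andP[p_prime ps_prime].
rewrite IH // andbT; apply/allP => q q_ps.
rewrite prime_coprime // dvdn_prime2 ?(allP ps_prime q q_ps) //.
by apply: contraNneq p_notin => ->.
Qed.

Lemma C_R_prod ns : ns != [::] -> all (leq 2) ns -> pairwise coprime ns ->
  C_R (\prod_(n <- ns) n) = \prod_(n <- ns) C_R n.
Proof.
elim: ns => [|n ns IH] // _ /andP[n_gt1 ns_gt1] /andP[n_co ns_co].
rewrite !big_cons; have [-> | ns_nil] := eqVneq ns [::].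
  by rewrite !big_nil !muln1.
by rewrite C_R_mul ?IH ?prodn_gt1 ?coprime_prodr.
Qed.

Theorem theorem10 (n : nat) (ps : seq nat) :
  uniq ps -> all prime ps -> n = \prod_(p <- ps) p ->
  odd n -> 1 < n -> ~~ prime n ->
  C_R n = \prod_(p <- ps) C_R p.
Proof.
move=> ps_uniq ps_prime -> _ n_gt1 _.
apply: C_R_prod; last exact: pairwise_coprime_primes.
  by apply: contraTneq n_gt1 => ->; rewrite big_nil.
by apply/allP => p /(allP ps_prime)/prime_gt1.
Qed.
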